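(* BC, MS and FT satisfy clearance: for every finite candidate set $C$, every profile $P$ over $C$ and every candidate $x\in C$ approved by no ballot of $P$, every axis $\triangleleft\in f(P)$ is such that there is no ballot $A\in P$ and $y,z\in A$ with $y\triangleleft x\triangleleft z$. VD and MF fail clearance: for each $f\in\{\mathrm{VD},\mathrm{MF}\}$ there exist $C$, a profile $P$, a never-approved candidate $x$, an axis $\triangleleft\in f(P)$ and a ballot $A\in P$ with $y,z\in A$ and $y\triangleleft x\triangleleft z$.
   Context: Let $C$ be a finite set of candidates. An approval ballot is a nonempty subset $A\subseteq C$; a profile is a finite sequence of ballots. An axis is a strict linear order $\triangleleft$ on $C$; $a\trianglelefteq b$ means $a\triangleleft b$ or $a=b$. A ballot $A$ is an interval of $\triangleleft$ if for all $a,b\in A$ and every $c$ with $a\triangleleft c\triangleleft b$ we have $c\in A$. For a cost function $\mathrm{cost}_f$, the scoring rule returns $f(P)=\arg\min_{\triangleleft}\sum_{A\in P}\mathrm{cost}_f(A,\triangleleft)$ over all axes on $C$. The five rules are the scoring rules with costs: $\mathrm{cost}_{\mathrm{VD}}(A,\triangleleft)=0$ if $A$ is an interval of $\triangleleft$ and $1$ otherwise; $\mathrm{cost}_{\mathrm{MF}}(A,\triangleleft)=\min_{x,y\in A,\ x\trianglelefteq y}\big(|\{z\in A: z\triangleleft x \text{ or } y\triangleleft z\}|+|\{z\notin A: x\triangleleft z\triangleleft y\}|\big)$; $\mathrm{cost}_{\mathrm{BC}}(A,\triangleleft)=|\{b\notin A: a\triangleleft b\triangleleft c \text{ for some } a,c\in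 A\}|$; $\mathrm{cost}_{\mathrm{MS}}(A,\triangleleft)=\sum_{x\in C\setminus A}\min\big(|\{y\in A:y\triangleleft x\}|,\,|\{y\in A:x\triangleleft y\}|\big)$; $\mathrm{cost}_{\mathrm{FT}}(A,\triangleleft)=\sum_{x\in C\setminus A}|\{y\in A:y\triangleleft x\}|\cdot|\{y\in A:x\triangleleft y\}|$. *)

From mathcomp Require Import all_boot.
Set Implicit Arguments. Unset Strict Implicit. Unset Printing Implicit Defensive.

(* Candidates: a finite type T.  An axis is a strict linear order r on T
   (x ◁ y is [r x y]).  Ballots: sets {set T}; a profile is a seq of ballots. *)

Definition is_axis (T : finType) (r : rel T) : Prop :=
  (forall x, ~~ r x x) /\
  (forall x y z, r x y -> r y z -> r x z) /\
  (forall x y, x != y -> r x y || r y x).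

Definition axle (T : finType) (r : rel T) (x y : T) : bool := r x y || (x == y).

Definition is_interval (T : finType) (A : {set T}) (r : rel T) : bool :=
  [forall a, forall b, forall c,
     [&& a \in A, b \in A, r a c & r c b] ==> (c \in A)].

Definition cost_VD (T : finType) (A : {set T}) (r : rel T) : nat :=
  if is_interval A r then 0 else 1.

(* min over x,y in A with x ⊴ y; #|T| is a harmless neutral element since
   every candidate value is <= #|T| and A is nonempty for ballots. *)
Definition cost_MF (T : finType) (A : {set T}) (r : rel T) : nat :=
  \big[minn/#|T|]_(x in A) \big[minn/#|T|]_(y in A | axle r x y)
     (#|[set z in A | r z x || r y z]| + #|[set z in ~: A | r x z && r z y]|).

Definition cost_BC (T : finType) (A : {set T}) (r : rel T) : nat :=
  #|[set b in ~: A | [exists a in A, exists c in A, r a b && r b c]]|.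

Definition cost_MS (T : finType) (A : {set T}) (r : rel T) : nat :=
  \sum_(x in ~: A) minn #|[set y in A | r y x]| #|[set y in A | r x y]|.

Definition cost_FT (T : finType) (A : {set T}) (r : rel T) : nat :=
  \sum_(x in ~: A) (#|[set y in A | r y x]| * #|[set y in A | r x y]|).

Inductive rule := VD | MF | BC | MS | FT.

Definition cost (f : rule) (T : finType) : {set T} -> rel T -> nat :=
  match f with
  | VD => @cost_VD T | MF => @cost_MF T | BC => @cost_BC T
  | MS => @cost_MS T | FT => @cost_FT T
  end.

Definition score (f : rule) (T : finType) (P : seq {set T}) (r : rel T) : nat :=
  \sum_(A <- P) cost f A r.

Definition in_rule (f : rule) (T : finType) (P : seq {set T}) (r : rel T) : Prop :=
  is_axis r /\ forall r' : rel T, is_axis r' -> score f P r <= score f P r'.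

Definition is_profile (T : finType) (P : seq {set T}) : Prop :=
  forall A, A \in P -> A != set0.

Definition clearance (f : rule) : Prop :=
  forall (T : finType) (P : seq {set T}) (x : T),
    is_profile P -> (forall A, A \in P -> x \notin A) ->
    forall r : rel T, in_rule f P r ->
      ~ (exists A, [/\ A \in P &
           exists y z, [/\ y \in A, z \in A, r y x & r x z]]).

From mathcomp Require Import all_boot all_order.

(* For BC, MS and FT the cost of a ballot B is a sum, over the
   candidates u outside B, of h (#approved left of u) (#approved right of u),
   with h = [(0 < m) && (0 < n)], minn and muln respectively; each satisfies
   h m 0 = 0 and h m n > 0 for m, n > 0.  Moving a never-approved x to the
   right end of an axis changes no term but the one of x, which drops to 0;
   if some ballot approves candidates on both sides of x, this strictly
   lowers the score, so the axis was not optimal.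

   For VD and MF: a candidate has at most one neighbour on each side
   of an axis, so for the star profile {1,0}, {1,2}, {1,4} no axis makes all
   three ballots intervals; as a ballot of MF cost 0 is an interval, every
   axis scores at least 1.  The natural order 0 < 1 < 2 < 3 < 4 scores 1,
   hence is optimal, yet the never-approved 3 lies between 1 and 4. *)

Set Implicit Arguments.
Unset Strict Implicit.
Unset Printing Implicit Defensive.

Import Order.TTheory.

Section MoveToRightEnd.
Variables (T : finType) (r : rel T) (x : T).

Definition move_to_right_end : rel T :=
  fun a b => if b == x then a != x else (a != x) && r a b.

Lemma move_to_right_end_axis : is_axis r -> is_axis move_to_right_end.
Proof.
rewrite /move_to_right_end => -[irr [tr tot]]; split; [|split].
- by move=> a; case: eqP => // _; rewrite (negbTE (irr a)) andbF.
- move=> a b c; have [//|cx] := eqVneq c x.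
    by move=> _; case: ifP => // _ /andP[].
  have [//|bx] := eqVneq b x.
  by move=> /andP[-> rab] /andP[_ rbc]; exact: tr rab rbc.
- move=> a b ab; have [bx|bx] := eqVneq b x; first by rewrite -bx ab.
  by have [|_] := eqVneq a x; rewrite ?orbT //= tot.
Qed.

Lemma move_to_right_end_neq a b : a != x -> b != x -> move_to_right_end a b = r a b.
Proof. by rewrite /move_to_right_end => -> /negbTE ->. Qed.

Lemma move_to_right_end_x_max b : move_to_right_end x b = false.
Proof. by rewrite /move_to_right_end eqxx; case: ifP. Qed.

End MoveToRightEnd.

Definition lefts (T : finType) (B : {set T}) (r : rel T) (u : T) : {set T} :=
  [set y in B | r y u].
Definition rights (T : finType) (B : {set T}) (r : rel T) (u : T) : {set T} :=
  [set y in B | r u y].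

Section SideCost.
Variables (T : finType) (h : nat -> nat -> nat).
Hypothesis h_n0 : forall n, h n 0 = 0.

Definition cost_sides (B : {set T}) (r : rel T) : nat :=
  \sum_(u in ~: B) h #|lefts B r u| #|rights B r u|.

Lemma cost_sides_move_to_right_end (B : {set T}) (r : rel T) (x : T) : x \notin B ->
  cost_sides B (move_to_right_end r x) + h #|lefts B r x| #|rights B r x| = cost_sides B r.
Proof.
move=> xB; have xB' : x \in ~: B by rewrite inE.
have neq_x y : y \in B -> y != x by apply: contraTneq => ->.
rewrite /cost_sides (bigD1 x xB') [RHS](bigD1 x xB') /=.
have -> : rights B (move_to_right_end r x) x = set0.
  by apply/setP => y; rewrite !inE move_to_right_end_x_max andbF.
rewrite cards0 h_n0 add0n addnC; congr (_ + _); apply: eq_bigr => u /andP[_ ux].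
by congr (h _ _); apply: eq_card => y; rewrite !inE;
  case: (boolP (y \in B)) => //= /neq_x yx; rewrite move_to_right_end_neq.
Qed.

End SideCost.

Lemma cost_BC_sides (T : finType) (B : {set T}) (r : rel T) :
  cost_BC B r = cost_sides (fun m n => (0 < m) && (0 < n)) B r.
Proof.
rewrite /cost_BC /cost_sides -sum1_card [LHS]big_mkcond [RHS]big_mkcond.
apply: eq_bigr => u _; rewrite !inE; case: (u \in B) => //=.
suff -> : [exists a in B, exists c in B, r a u && r u c] =
          (0 < #|lefts B r u|) && (0 < #|rights B r u|) by case: (_ && _).
apply/idP/idP.
- case/existsP=> a /andP[aB /existsP[c /andP[cB /andP[rau ruc]]]].
  by apply/andP; split; apply/card_gt0P; [exists a | exists c]; rewrite inE ?aB ?cB.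
- case/andP=> /card_gt0P[a] /[!inE] /andP[aB rau] /card_gt0P[c] /[!inE] /andP[cB ruc].
  by apply/existsP; exists a; rewrite aB; apply/existsP; exists c; rewrite cB rau ruc.
Qed.

Lemma clearance_cost_sides (f : rule) (h : nat -> nat -> nat) :
  (forall n, h n 0 = 0) -> (forall m n, 0 < m -> 0 < n -> 0 < h m n) ->
  (forall (T : finType) (B : {set T}) (r : rel T), cost f B r = cost_sides h B r) ->
  clearance f.
Proof.
move=> h_n0 h_gt0 costE T P x _ xP r [axis_r r_min] [A [AP [y [z [yA zA ryx rxz]]]]].
have score_split : score f P r =
    score f P (move_to_right_end r x) + \sum_(B <- P) h #|lefts B r x| #|rights B r x|.
  rewrite /score -big_split; apply: eq_big_seq => B BP /=.
  by rewrite !costE cost_sides_move_to_right_end // xP.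
have := r_min _ (move_to_right_end_axis x axis_r).
rewrite score_split -[leqRHS]addn0 leq_add2l leqn0 sum_nat_seq_eq0.
move=> /allP/(_ A AP) /=; rewrite -leqn0 leqNgt h_gt0 //.
  by apply/card_gt0P; exists y; rewrite inE yA.
by apply/card_gt0P; exists z; rewrite inE zA.
Qed.

Lemma clearance_BC : clearance BC.
Proof.
apply: (clearance_cost_sides (h := fun m n => (0 < m) && (0 < n))) => [n|m n -> ->|] //.
- by rewrite andbF.
- exact: cost_BC_sides.
Qed.

Lemma clearance_MS : clearance MS.
Proof.
apply: (@clearance_cost_sides _ _ minn0) => [m n m_gt0 n_gt0|//].
by rewrite leq_min m_gt0.
Qed.

Lemma clearance_FT : clearance FT.
Proof. by apply: (@clearance_cost_sides _ _ muln0) => // m n; rewrite muln_gt0 => -> ->. Qed.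

Lemma intervalP (T : finType) (A : {set T}) (r : rel T) :
  reflect (forall a b c, a \in A -> b \in A -> r a c -> r c b -> c \in A)
          (is_interval A r).
Proof.
apply: (iffP forallP) => [I a b c aA bA rac rcb | I a].
  by move: (I a) => /forallP/(_ b)/forallP/(_ c)/implyP; apply; rewrite aA bA rac.
by apply/forallP=> b; apply/forallP=> c; apply/implyP=> /and4P[]; apply: I.
Qed.

Lemma cost_MF_le (T : finType) (A : {set T}) (r : rel T) u v :
  u \in A -> v \in A -> axle r u v ->
  cost_MF A r <= #|[set z in A | r z u || r v z]| + #|[set z in ~: A | r u z && r z v]|.
Proof.
move=> uA vA uv; rewrite /cost_MF.
apply: leq_trans (@bigmin_le_cond _ nat _ _ _ _ _ uA) _.
by apply: (@bigmin_le_cond _ nat); rewrite vA.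
Qed.

Section Axis.
Variables (T : finType) (r : rel T).
Hypothesis axis_r : is_axis r.

Lemma axis_irr x : r x x = false.
Proof. by case: axis_r => irr _; apply: negbTE. Qed.

Lemma axis_asym x y : x != y -> r y x = ~~ r x y.
Proof.
case: axis_r => irr [tr tot] xy; case: (boolP (r x y)) => [rxy|nxy].
  by apply/negP => ryx; move: (irr x); rewrite (tr _ _ _ rxy ryx).
by move: (tot x y xy); rewrite (negbTE nxy).
Qed.

Lemma axis_lt_asym x y : r x y -> r y x = false.
Proof.
case: axis_r => _ [tr _] rxy; apply/negbTE/negP => ryx.
by move: (axis_irr x); rewrite (tr _ _ _ rxy ryx).
Qed.

Lemma axis_le_lt_trans x y z : ~~ r y x -> r y z -> r x z.
Proof.
case: axis_r => _ [tr _]; have [-> //|xy] := eqVneq x y.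
by rewrite -axis_asym; [exact: tr | rewrite eq_sym].
Qed.

Lemma axis_lt_le_trans x y z : r x y -> ~~ r z y -> r x z.
Proof.
case: axis_r => _ [tr _]; have [-> //|yz] := eqVneq y z.
by rewrite -axis_asym; [exact: tr | rewrite eq_sym].
Qed.

Lemma interval_of_cost_MF_eq0 (A : {set T}) : cost_MF A r = 0 -> is_interval A r.
Proof.
move=> cost0; apply/intervalP => a b c aA bA rac rcb; apply/negPn/negP => cA.
suff : 0 < cost_MF A r by rewrite cost0.
have T_gt0 : 0 < #|T| by apply/card_gt0P; exists a.
rewrite /cost_MF; apply/(@bigmin_gtP _ nat); split=> // u uA.
apply/(@bigmin_gtP _ nat); split=> // v /andP[vA _]; rewrite ltEnat /=.
case: (boolP (r a u || r v b)) => [|/norP[nau nvb]].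
  case/orP=> [rau|rvb]; rewrite addn_gt0; apply/orP; left; apply/card_gt0P.
    by exists a; rewrite inE aA rau.
  by exists b; rewrite inE bA rvb orbT.
rewrite addn_gt0; apply/orP; right; apply/card_gt0P; exists c.
by rewrite !inE cA (axis_le_lt_trans nau rac) (axis_lt_le_trans rcb nvb).
Qed.

Lemma cost_MF_pair_le1 a b : cost_MF [set a; b] r <= 1.
Proof.
have aA : a \in [set a; b] by rewrite !inE eqxx.
apply: leq_trans (cost_MF_le aA aA _) _; first by rewrite /axle eqxx orbT.
have -> : [set z in ~: [set a; b] | r a z && r z a] = set0.
  by apply/setP => z; rewrite !inE; apply/negbTE/negP => /andP[_ /andP[/axis_lt_asym ->]].
rewrite cards0 addn0 -(cards1 b); apply: subset_leq_card; apply/subsetP => z.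
by rewrite !inE => /andP[/orP[/eqP ->|//]]; rewrite axis_irr.
Qed.

Lemma cost_MF_adjacent_pair a b :
  r a b -> (forall c, r a c -> ~~ r c b) -> cost_MF [set a; b] r = 0.
Proof.
move=> rab adj; apply/eqP; rewrite -leqn0.
have [aA bA] : a \in [set a; b] /\ b \in [set a; b] by rewrite !inE !eqxx orbT.
apply: leq_trans (cost_MF_le aA bA _) _; first by rewrite /axle rab.
rewrite leqn0 addn_eq0 !cards_eq0; apply/andP; split; apply/eqP/setP => z; rewrite !inE.
  by apply/negbTE/negP => /andP[/orP[] /eqP ->]; rewrite axis_irr (axis_lt_asym rab).
by apply/negbTE/negP => /andP[_ /andP[/adj /negP]].
Qed.

Lemma adjacent_sides_differ a u v : u != v -> u != a -> v != a ->
  is_interval [set a; u] r -> is_interval [set a; v] r -> r u a != r v a.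
Proof.
wlog ruv : u v / r u v => [hwlog uv ua va Iu Iv|uv ua va Iu Iv].
  case: axis_r => _ [_ tot]; case/orP: (tot u v uv) => [ruv|rvu]; first exact: hwlog.
  by rewrite eq_sym; apply: hwlog; rewrite // eq_sym.
have [aAu uAu] : a \in [set a; u] /\ u \in [set a; u] by rewrite !inE !eqxx orbT.
have [aAv vAv] : a \in [set a; v] /\ v \in [set a; v] by rewrite !inE !eqxx orbT.
apply/negP => /eqP same; case: (boolP (r u a)) => [rua|nua].
  move/intervalP: Iu => /(_ u a v uAu aAu ruv); rewrite -same rua => /(_ isT).
  by rewrite !inE (negbTE va) eq_sym (negbTE uv).
have rau : r a u by rewrite (axis_asym ua).
have rav : r a v by rewrite (axis_asym va) -same.
move/intervalP: Iv => /(_ a v u aAv vAv rau ruv).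
by rewrite !inE (negbTE ua) (negbTE uv).
Qed.

Lemma star_not_intervals a b c d : uniq [:: a; b; c; d] ->
  ~~ [&& is_interval [set a; b] r, is_interval [set a; c] r & is_interval [set a; d] r].
Proof.
rewrite /= !inE !negb_or => /and4P[/and3P[ab ac ad] /andP[bc bd] cd _].
apply/negP => /and3P[Ib Ic Id]; rewrite !(eq_sym a) in ab ac ad.
have := adjacent_sides_differ bc ab ac Ib Ic.
have := adjacent_sides_differ bd ab ad Ib Id.
have := adjacent_sides_differ cd ac ad Ic Id.
by case: (r b a); case: (r c a); case: (r d a).
Qed.

End Axis.

Lemma interval_of_cost_eq0 (f : rule) (T : finType) (A : {set T}) (r : rel T) :
  f = VD \/ f = MF -> is_axis r -> cost f A r = 0 -> is_interval A r.
Proof.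
case=> -> axis_r /=; last exact: interval_of_cost_MF_eq0.
by rewrite /cost_VD; case: ifP.
Qed.

Lemma star_score_gt0 (f : rule) (T : finType) (r : rel T) a b c d :
  f = VD \/ f = MF -> is_axis r -> uniq [:: a; b; c; d] ->
  0 < score f [:: [set a; b]; [set a; c]; [set a; d]] r.
Proof.
move=> f_VD_MF axis_r abcd; have := star_not_intervals axis_r abcd.
have cost0_interval A : cost f A r = 0 -> is_interval A r.
  exact: interval_of_cost_eq0.
rewrite /score !big_cons big_nil addn0 lt0n !addn_eq0; apply: contra.
by case/and3P=> /eqP/cost0_interval -> /eqP/cost0_interval -> /eqP/cost0_interval.
Qed.

Definition ord_axis (n : nat) : rel 'I_n := fun u v => u < v.
Arguments ord_axis : clear implicits.

Lemma ord_axis_axis n : is_axis (ord_axis n).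
Proof.
rewrite /ord_axis; split; first by move=> u; rewrite ltnn.
split; first by move=> u v w; apply: ltn_trans.
by move=> u v; rewrite -val_eqE neq_ltn.
Qed.

Lemma ord_axis_succ n (u v : 'I_n) :
  v = u.+1 :> nat -> forall w, ord_axis n u w -> ~~ ord_axis n w v.
Proof. by rewrite /ord_axis => -> w; rewrite ltnS -ltnNge. Qed.

Definition star_profile : seq {set 'I_5} :=
  [:: [set inord 1; inord 0]; [set inord 1; inord 2]; [set inord 1; inord 4]].

Lemma star_profile_score_le1 (f : rule) :
  f = VD \/ f = MF -> score f star_profile (ord_axis 5) <= 1.
Proof.
have axis5 := ord_axis_axis 5.
have cost10 : cost_MF [set inord 1; inord 0] (ord_axis 5) = 0.
  rewrite setUC; apply: (cost_MF_adjacent_pair axis5); last apply: ord_axis_succ;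
  by rewrite /ord_axis !inordK.
have cost12 : cost_MF [set inord 1; inord 2] (ord_axis 5) = 0.
  apply: (cost_MF_adjacent_pair axis5); last apply: ord_axis_succ;
  by rewrite /ord_axis !inordK.
rewrite /score !big_cons big_nil addn0.
case=> -> /=; last by rewrite cost10 cost12 cost_MF_pair_le1.
rewrite /cost_VD (interval_of_cost_MF_eq0 axis5 cost10).
by rewrite (interval_of_cost_MF_eq0 axis5 cost12); case: ifP.
Qed.

Theorem mainTheorem7 :
  (clearance BC /\ clearance MS /\ clearance FT) /\
  (forall f, (f = VD \/ f = MF) ->
     exists (T : finType) (P : seq {set T}) (x : T) (r : rel T) (A : {set T}) (y z : T),
       [/\ is_profile P, (forall B, B \in P -> x \notin B), in_rule f P r,
           A \in P & [/\ y \in A, z \in A, r y x & r x z]]).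
Proof.
split; first exact: (conj clearance_BC (conj clearance_MS clearance_FT)).
move=> f f_VD_MF.
exists ('I_5 : finType), star_profile, (inord 3), (ord_axis 5), [set inord 1; inord 4],
  (inord 1), (inord 4).
split.
- move=> B; rewrite !inE => /or3P[] /eqP ->;
  by apply/set0Pn; exists (inord 1); rewrite !inE eqxx.
- by move=> B; rewrite !inE => /or3P[] /eqP ->; rewrite !inE -!val_eqE /= !inordK.
- split=> [|r' axis_r']; first exact: ord_axis_axis.
  apply: leq_trans (star_profile_score_le1 f_VD_MF) (star_score_gt0 f_VD_MF axis_r' _).
  by rewrite /= !inE -!val_eqE /= !inordK.
- by rewrite !inE eqxx !orbT.
- by rewrite !inE !eqxx orbT /ord_axis !inordK.
Qed.
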